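(* Let $\lambda$ be a countable limit ordinal and let $\rho<\lambda$ be an isolated ordinal. Then there are a surjection $\diamond_{\rho,\lambda}\colon [\rho,\lambda) \to \mathrm{LIM}((\rho,\lambda])$, a mapping $\ell_{\rho,\lambda}\colon [\rho,\lambda] \to \omega \setminus \{0\}$, and a mapping $a_{\rho,\lambda}\colon \mathrm{LIM}((\rho,\lambda]) \times \omega \to [\rho,\lambda)$ such that: (a) for every $\beta \in [\rho,\lambda)$ there exists a positive integer $s$ with $\beta < \diamond_{\rho,\lambda}(\beta) < \diamond_{\rho,\lambda}^2(\beta)<\dots<\diamond_{\rho,\lambda}^{s}(\beta)=\lambda$ (where $\diamond^k$ denotes the $k$-fold iterate); (b) for every $\mu \in \mathrm{LIM}((\rho,\lambda])$: the sequence $(a_{\rho,\lambda}(\mu,k))_{k=0}^{\infty}$ is increasing with limit $\mu$; $\diamond_{\rho,\lambda}^{-1}(\mu) = \{a_{\rho,\lambda}(\mu,k) : k \in \omega\}$; $\ell_{\rho,\lambda}(a_{\rho,\lambda}(\mu,k))=\ell_{\rho,\lambda}(\mu)+k$ for all $k\in\omega$; moreover $\ell_{\rho,\lambda}(\lambda) = 1$ and $\ell_{\rho,\lambda}(\rho) = 1$; (c) for every $\beta \in [\rho,\lambda)$ and every $\gamma \in (\beta,\diamond_{\rho,\lambda}(\beta))$ we have $\ell_{\rho,\lambda}(\gamma)>\ell_{\rho,\lambda}(\beta)$ and $\diamond_{\rho,\lambda}(\gamma)\le\diamond_{\rho,\lambda}(\beta)$; (d) for every $\beta \in [\rho,\lambda)$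 we have $\ell_{\rho,\lambda}(\beta+1)=\ell_{\rho,\lambda}(\beta)+1$.
   Context: An ordinal is isolated if it is not a limit ordinal (so $0$ and successor ordinals are isolated). For a set $A$ of ordinals, $\mathrm{LIM}(A)$ denotes the set of limit ordinals in $A$. Intervals such as $[\rho,\lambda)$ are intervals of ordinals. *)

(* Ordinals are modelled by an arbitrary strict well-order
   (T, lt): every ordinal up to lambda is an element of such an order, and
   any well-order with elements below lambda is isomorphic on [0,lambda] to
   the ordinal lambda+1. *)
From Stdlib Require Import Arith Wellfounded.

Section Ord.
Context {T : Type}.
Variable lt : T -> T -> Prop.

Definition is_well_order : Prop :=
  (forall x, ~ lt x x) /\
  (forall x y z, lt x y -> lt y z -> lt x z) /\
  (forall x y, lt x y \/ x = y \/ lt y x) /\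
  well_founded lt.

Definition le (x y : T) : Prop := lt x y \/ x = y.

Definition is_succ_of (y x : T) : Prop :=
  lt x y /\ forall z, lt x z -> le y z.

Definition isolated (x : T) : Prop :=
  (forall y, ~ lt y x) \/ exists y, is_succ_of x y.

Definition limit (x : T) : Prop := ~ isolated x.

Definition countable_upto (lam : T) : Prop :=
  exists f : T -> nat, forall x y, le x lam -> le y lam -> f x = f y -> x = y.

Definition in_co (a b x : T) : Prop := le a x /\ lt x b.
Definition in_cc (a b x : T) : Prop := le a x /\ le x b.
Definition in_oc (a b x : T) : Prop := lt a x /\ le x b.
Definition in_oo (a b x : T) : Prop := lt a x /\ lt x b.

Definition in_LIM_oc (a b mu : T) : Prop := in_oc a b mu /\ limit mu.

Definition increasing_to (s : nat -> T) (mu : T) : Prop :=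
  (forall k, lt (s k) (s (S k))) /\
  (forall k, lt (s k) mu) /\
  (forall g, lt g mu -> exists k, lt g (s k)).

End Ord.

From Stdlib Require Import Arith Lia Classical ClassicalEpsilon Wf_nat FinFun.

(* Fix an injective coding of [0, λ] by natural numbers. For a limit y and
   x < y, the ladder from x to y is x = s_0 < s_1 < ..., where s_(k+1) is the
   limit in (s_k, y) of least code, or s_k + 1 if there is none. It is cofinal
   in y: otherwise its supremum is a limit below y lying above every s_k, so the
   pairwise distinct codes of the s_(k+1) would all be bounded by its code.

   Start with the ladder from ρ to λ and hang below each limit rung s_(k+1) the
   ladder from s_k + 1 to s_(k+1). Descending from the root, always into the gap
   [s_k, s_(k+1)) containing β, shows that every β in [ρ, λ) is a rung of a
   ladder of this tree, and determinism of the descent makes that ladder and the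
   position of β on it unique. Then ⋄(β) is the top of that ladder, ℓ(β) = e + k
   when β is its k-th rung and e is the level of the ladder (1 for the root,
   e + k + 1 for a ladder hung below rung k + 1 of a ladder of level e), and
   a(μ, ·) enumerates the ladder with top μ; since bases of ladders are
   isolated, every limit μ in (ρ, λ] is the top of a ladder. *)

Lemma nat_least (P : nat -> Prop) :
  (exists n, P n) -> exists n, P n /\ forall m, P m -> n <= m.
Proof.
  intros Hex.
  destruct (dec_inh_nat_subset_has_unique_least_element P (fun n => classic (P n)) Hex)
    as [n [Hn _]].
  now exists n.
Qed.

Lemma injective_nat_not_bounded (g : nat -> nat) (N : nat) :
  (forall i j, g i = g j -> i = j) -> ~ (forall k, g k <= N).
Proof.
  intros Hinj Hle.
  assert (Hfun : bFun (S (S N)) g) by (intros x _; specialize (Hle x); lia).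
  assert (Hbinj : bInjective (S (S N)) g) by (intros x y _ _; apply Hinj).
  destruct (proj1 (bInjective_bSurjective Hfun) Hbinj (S N)) as [k [_ Hk]]; [lia|].
  specialize (Hle k); lia.
Qed.

Section LadderSystem.

(** * Well-orders *)

Context {T : Type} (lt : T -> T -> Prop).
Hypothesis Hwo : is_well_order lt.

Local Notation "x ≺ y" := (lt x y) (at level 70).
Local Notation "x ≼ y" := (le lt x y) (at level 70).

Lemma lt_irrefl x : ~ x ≺ x.
Proof. exact (proj1 Hwo x). Qed.

Lemma lt_trans x y z : x ≺ y -> y ≺ z -> x ≺ z.
Proof. exact (proj1 (proj2 Hwo) x y z). Qed.

Lemma lt_trichotomy x y : x ≺ y \/ x = y \/ y ≺ x.
Proof. exact (proj1 (proj2 (proj2 Hwo)) x y). Qed.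

Lemma lt_wf : well_founded lt.
Proof. exact (proj2 (proj2 (proj2 Hwo))). Qed.

Lemma le_refl x : x ≼ x.
Proof. now right. Qed.

Lemma lt_le_incl x y : x ≺ y -> x ≼ y.
Proof. now left. Qed.

Lemma le_lt_trans x y z : x ≼ y -> y ≺ z -> x ≺ z.
Proof. intros [Hxy | <-] Hyz; [exact (lt_trans _ _ _ Hxy Hyz) | exact Hyz]. Qed.

Lemma lt_le_trans x y z : x ≺ y -> y ≼ z -> x ≺ z.
Proof. intros Hxy [Hyz | <-]; [exact (lt_trans _ _ _ Hxy Hyz) | exact Hxy]. Qed.

Lemma le_trans x y z : x ≼ y -> y ≼ z -> x ≼ z.
Proof. intros [Hxy | <-] Hyz; [left; exact (lt_le_trans _ _ _ Hxy Hyz) | exact Hyz]. Qed.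

Lemma lt_not_ge x y : x ≺ y -> ~ y ≼ x.
Proof. intros Hxy Hyx. exact (lt_irrefl x (lt_le_trans _ _ _ Hxy Hyx)). Qed.

Lemma not_lt_ge x y : ~ x ≺ y -> y ≼ x.
Proof.
  intros Hn. destruct (lt_trichotomy x y) as [H | [-> | H]]; [tauto | apply le_refl | now left].
Qed.

Lemma le_antisym x y : x ≼ y -> y ≼ x -> x = y.
Proof. intros [Hxy | ->] Hyx; [exfalso; exact (lt_not_ge _ _ Hxy Hyx) | reflexivity]. Qed.

Lemma well_order_least (P : T -> Prop) :
  (exists x, P x) -> exists x, P x /\ forall y, P y -> x ≼ y.
Proof.
  intros [x Hx]. induction x as [x IH] using (well_founded_ind lt_wf).
  destruct (classic (exists y, P y /\ y ≺ x)) as [[y [Hy Hyx]] | Hnone].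
  - exact (IH y Hyx Hy).
  - exists x. split; [exact Hx|]. intros y Hy. apply not_lt_ge. intros Hyx. eauto.
Qed.

Definition succ (c : T) : T := epsilon (inhabits c) (fun z => is_succ_of lt z c).

Lemma succ_spec c z : c ≺ z -> is_succ_of lt (succ c) c.
Proof.
  intros Hcz. unfold succ. apply epsilon_spec.
  destruct (well_order_least (lt c) (ex_intro _ z Hcz)) as [s [Hs Hmin]].
  now exists s.
Qed.

Lemma lt_succ c z : c ≺ z -> c ≺ succ c.
Proof. intros Hcz. exact (proj1 (succ_spec c z Hcz)). Qed.

Lemma succ_le c z : c ≺ z -> succ c ≼ z.
Proof. intros Hcz. exact (proj2 (succ_spec c z Hcz) z Hcz). Qed.

Lemma lt_succ_le c z a : c ≺ z -> a ≺ succ c -> a ≼ c.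
Proof.
  intros Hcz Ha. apply not_lt_ge. intros Hca.
  exact (lt_not_ge _ _ Ha (succ_le c a Hca)).
Qed.

Lemma succ_unique c z : is_succ_of lt z c -> succ c = z.
Proof.
  intros [Hcz Hmin]. apply le_antisym; [exact (succ_le c z Hcz)|].
  apply Hmin, (lt_succ c z Hcz).
Qed.

Lemma succ_isolated c z : c ≺ z -> isolated lt (succ c).
Proof. intros Hcz. right. exists c. exact (succ_spec c z Hcz). Qed.

Lemma succ_lt_limit c y : limit lt y -> c ≺ y -> succ c ≺ y.
Proof.
  intros Hy Hcy. destruct (succ_le c y Hcy) as [Hlt | Heq]; [exact Hlt|].
  exfalso. apply Hy. rewrite <- Heq. exact (succ_isolated c y Hcy).
Qed.

Lemma increasing_sup_limit (s : nat -> T) (z : T) :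
  (forall k, s k ≺ s (S k)) -> (forall k, s k ≺ z) ->
  exists sup, (forall k, s k ≺ sup) /\ sup ≼ z /\ limit lt sup.
Proof.
  intros Hinc Hz.
  destruct (well_order_least (fun u => forall k, s k ≺ u) (ex_intro _ z Hz))
    as [sup [Hsup Hmin]].
  exists sup. split; [exact Hsup|]. split; [exact (Hmin z Hz)|].
  intros [Hbot | [w [Hw Hwsucc]]]; [exact (Hbot (s 0) (Hsup 0))|].
  destruct (classic (forall k, s k ≺ w)) as [Hall | Hex].
  - exact (lt_not_ge _ _ Hw (Hmin w Hall)).
  - apply not_all_ex_not in Hex as [k Hk]. apply not_lt_ge in Hk.
    apply (lt_not_ge _ _ (Hsup (S k))).
    apply Hwsucc, (le_lt_trans _ _ _ Hk (Hinc k)).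
Qed.

(** * Ladders *)

Variables (lam rho : T) (code : T -> nat).
Hypothesis Hcode : forall x y, x ≼ lam -> y ≼ lam -> code x = code y -> x = y.
Hypothesis Hlam : limit lt lam.
Hypothesis Hrho : isolated lt rho.
Hypothesis Hrl : rho ≺ lam.

Definition limit_between (c y m : T) : Prop := limit lt m /\ c ≺ m /\ m ≺ y.

Definition next_rung_spec (y c v : T) : Prop :=
  (limit_between c y v /\ forall m, limit_between c y m -> code v <= code m) \/
  ((forall m, ~ limit_between c y m) /\ v = succ c).

Definition next_rung (y c : T) : T := epsilon (inhabits c) (next_rung_spec y c).

Definition ladder (x y : T) (k : nat) : T := Nat.iter k (next_rung y) x.

Lemma next_rung_correct y c : next_rung_spec y c (next_rung y c).
Proof.
  unfold next_rung. apply epsilon_spec.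
  destruct (classic (exists m, limit_between c y m)) as [[m Hm] | Hnone].
  - destruct (nat_least (fun n => exists m, limit_between c y m /\ code m = n)
                (ex_intro _ _ (ex_intro _ m (conj Hm eq_refl))))
      as [n [[v [Hv <-]] Hmin]].
    exists v. left. split; [exact Hv|]. intros m' Hm'. apply Hmin. eauto.
  - exists (succ c). right. split; [|reflexivity]. intros m Hm. eauto.
Qed.

Lemma next_rung_bounds y c : limit lt y -> c ≺ y -> c ≺ next_rung y c /\ next_rung y c ≺ y.
Proof.
  intros Hy Hcy. destruct (next_rung_correct y c) as [[[_ Hv] _] | [_ ->]]; [exact Hv|].
  split; [exact (lt_succ c y Hcy) | exact (succ_lt_limit c y Hy Hcy)].
Qed.

Lemma next_rung_limit y c g : c ≺ g -> g ≺ next_rung y c -> limit lt (next_rung y c).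
Proof.
  intros Hcg Hg. destruct (next_rung_correct y c) as [[[Hv _] _] | [_ Hv]]; [exact Hv|].
  rewrite Hv in Hg. exfalso. exact (lt_not_ge _ _ Hcg (lt_succ_le c g g Hcg Hg)).
Qed.

Lemma ladder_gap_limit x y k g :
  ladder x y k ≺ g -> g ≺ ladder x y (S k) -> limit lt (ladder x y (S k)).
Proof. apply next_rung_limit. Qed.

Section Ladder.

Variables x y : T.
Hypothesis Hy : limit lt y.
Hypothesis Hxy : x ≺ y.

Lemma ladder_lt_top k : ladder x y k ≺ y.
Proof. induction k as [|k IH]; [exact Hxy | exact (proj2 (next_rung_bounds y _ Hy IH))]. Qed.

Lemma ladder_lt_succ k : ladder x y k ≺ ladder x y (S k).
Proof. exact (proj1 (next_rung_bounds y _ Hy (ladder_lt_top k))). Qed.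

Lemma ladder_lt_mono i j : i < j -> ladder x y i ≺ ladder x y j.
Proof.
  induction j as [|j IH]; intros Hij; [lia|].
  destruct (Nat.eq_dec i j) as [-> | Hne]; [apply ladder_lt_succ|].
  exact (lt_trans _ _ _ (IH ltac:(lia)) (ladder_lt_succ j)).
Qed.

Lemma ladder_le_mono i j : i <= j -> ladder x y i ≼ ladder x y j.
Proof.
  intros Hij. destruct (Nat.eq_dec i j) as [-> | Hne]; [apply le_refl|].
  left. apply ladder_lt_mono. lia.
Qed.

Lemma ladder_base_le k : x ≼ ladder x y k.
Proof. exact (ladder_le_mono 0 k (Nat.le_0_l k)). Qed.

Lemma ladder_lt_inv i j : ladder x y i ≺ ladder x y j -> i < j.
Proof.
  intros Hlt. apply Nat.nle_gt. intros Hji. exact (lt_not_ge _ _ Hlt (ladder_le_mono j i Hji)).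
Qed.

Lemma ladder_interval_unique i j g :
  ladder x y i ≼ g -> g ≺ ladder x y (S i) ->
  ladder x y j ≼ g -> g ≺ ladder x y (S j) -> i = j.
Proof.
  intros Hi Hi' Hj Hj'.
  pose proof (ladder_lt_inv _ _ (le_lt_trans _ _ _ Hi Hj')).
  pose proof (ladder_lt_inv _ _ (le_lt_trans _ _ _ Hj Hi')).
  lia.
Qed.

Lemma ladder_inj i j : ladder x y i = ladder x y j -> i = j.
Proof.
  intros Heq. apply (ladder_interval_unique i j (ladder x y i)).
  - apply le_refl.
  - apply ladder_lt_succ.
  - rewrite Heq. apply le_refl.
  - rewrite Heq. apply ladder_lt_succ.
Qed.

Hypothesis Hylam : y ≼ lam.

Lemma ladder_cofinal z : z ≺ y -> exists k, z ≺ ladder x y k.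
Proof.
  intros Hzy. apply NNPP. intros Hnot.
  assert (Hbound : forall k, ladder x y k ≺ z).
  { intros k. apply (lt_le_trans _ _ _ (ladder_lt_succ k)), not_lt_ge.
    intros Hlt. eauto. }
  destruct (increasing_sup_limit (ladder x y) z ladder_lt_succ Hbound)
    as [sup [Hsup [Hsupz Hlim]]].
  apply (injective_nat_not_bounded (fun k => code (ladder x y (S k))) (code sup)).
  - intros i j Heq. enough (S i = S j) by lia. apply ladder_inj, Hcode; [| | exact Heq];
      left; exact (lt_le_trans _ _ _ (ladder_lt_top _) Hylam).
  - intros k.
    assert (Hbetween : limit_between (ladder x y k) y sup)
      by (repeat split; [exact Hlim | exact (Hsup k) | exact (le_lt_trans _ _ _ Hsupz Hzy)]).
    destruct (next_rung_correct y (ladder x y k)) as [[_ Hmin] | [Hnone _]].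
    + exact (Hmin sup Hbetween).
    + exfalso. exact (Hnone sup Hbetween).
Qed.

Lemma ladder_locate g :
  x ≼ g -> g ≺ y -> exists j, ladder x y j ≼ g /\ g ≺ ladder x y (S j).
Proof.
  intros Hxg Hgy.
  destruct (nat_least (fun k => g ≺ ladder x y k) (ladder_cofinal g Hgy)) as [[|j] [Hj Hmin]].
  - exfalso. exact (lt_not_ge _ _ Hj Hxg).
  - exists j. split; [|exact Hj]. apply not_lt_ge. intros Hlt. specialize (Hmin j Hlt). lia.
Qed.

End Ladder.

(** * The tree of ladders *)

(* Rung k of a node N will get the value [level N + k] of ℓ. *)
Record node : Type := Node { base : T; top : T; level : nat }.

Definition rung (N : node) (k : nat) : T := ladder (base N) (top N) k.

Definition root : node := Node rho lam 1.

Definition child (N : node) (k : nat) : node :=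
  Node (succ (rung N k)) (rung N (S k)) (level N + S k).

Inductive is_node : node -> Prop :=
  | is_node_root : is_node root
  | is_node_child N k : is_node N -> limit lt (rung N (S k)) -> is_node (child N k).

Lemma is_node_top_limit N : is_node N -> limit lt (top N).
Proof. intros [|P k _ Hl]; [exact Hlam | exact Hl]. Qed.

Lemma is_node_base_lt_top N : is_node N -> base N ≺ top N.
Proof.
  induction 1 as [|P k HP IH Hl]; [exact Hrl|].
  apply succ_lt_limit; [exact Hl|].
  exact (ladder_lt_succ _ _ (is_node_top_limit P HP) IH k).
Qed.

Lemma is_node_bounds N : is_node N -> rho ≼ base N /\ top N ≼ lam.
Proof.
  induction 1 as [|P k HP [IHb IHt] Hl]; [split; apply le_refl|].
  pose proof (is_node_top_limit P HP) as Hy. pose proof (is_node_base_lt_top P HP) as Hxy.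
  split.
  - left. apply (le_lt_trans _ _ _ (le_trans _ _ _ IHb (ladder_base_le _ _ Hy Hxy k))).
    exact (lt_succ _ _ (ladder_lt_top _ _ Hy Hxy k)).
  - left. exact (lt_le_trans _ _ _ (ladder_lt_top _ _ Hy Hxy (S k)) IHt).
Qed.

Lemma is_node_base_isolated N : is_node N -> isolated lt (base N).
Proof.
  intros [|P k HP _]; [exact Hrho|].
  apply (succ_isolated _ (rung P (S k))).
  exact (ladder_lt_succ _ _ (is_node_top_limit P HP) (is_node_base_lt_top P HP) k).
Qed.

Lemma is_node_level_pos N : is_node N -> 1 <= level N.
Proof. induction 1 as [|P k _ IH _]; simpl; lia. Qed.

Section NodeRungs.

Context {N : node} (HN : is_node N).

Let Hy := is_node_top_limit N HN.
Let Hxy := is_node_base_lt_top N HN.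

Lemma rung_lt_top k : rung N k ≺ top N.
Proof. exact (ladder_lt_top _ _ Hy Hxy k). Qed.

Lemma rung_lt_succ k : rung N k ≺ rung N (S k).
Proof. exact (ladder_lt_succ _ _ Hy Hxy k). Qed.

Lemma base_le_rung k : base N ≼ rung N k.
Proof. exact (ladder_base_le _ _ Hy Hxy k). Qed.

Lemma rung_lt_inv i j : rung N i ≺ rung N j -> i < j.
Proof. exact (ladder_lt_inv _ _ Hy Hxy i j). Qed.

Lemma rung_inj i j : rung N i = rung N j -> i = j.
Proof. exact (ladder_inj _ _ Hy Hxy i j). Qed.

Lemma rung_interval_unique i j g :
  rung N i ≼ g -> g ≺ rung N (S i) -> rung N j ≼ g -> g ≺ rung N (S j) -> i = j.
Proof. exact (ladder_interval_unique _ _ Hy Hxy i j g). Qed.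

Lemma rung_locate g : base N ≼ g -> g ≺ top N -> exists j, rung N j ≼ g /\ g ≺ rung N (S j).
Proof. exact (ladder_locate _ _ Hy Hxy (proj2 (is_node_bounds N HN)) g). Qed.

Lemma rung_cofinal g : g ≺ top N -> exists k, g ≺ rung N k.
Proof. exact (ladder_cofinal _ _ Hy Hxy (proj2 (is_node_bounds N HN)) g). Qed.

Lemma rung_lt_lam k : rung N k ≺ lam.
Proof. exact (lt_le_trans _ _ _ (rung_lt_top k) (proj2 (is_node_bounds N HN))). Qed.

Lemma rung_in_co k : in_co lt rho lam (rung N k).
Proof.
  exact (conj (le_trans _ _ _ (proj1 (is_node_bounds N HN)) (base_le_rung k)) (rung_lt_lam k)).
Qed.

End NodeRungs.

Lemma child_is_node N k g :
  is_node N -> rung N k ≺ g -> g ≺ rung N (S k) -> is_node (child N k).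
Proof. intros HN Hk Hk'. exact (is_node_child N k HN (ladder_gap_limit _ _ k g Hk Hk')). Qed.

Inductive descent (b : T) : node -> node -> Prop :=
  | descent_here N k : rung N k = b -> descent b N N
  | descent_down N k F : rung N k ≺ b -> b ≺ rung N (S k) ->
      descent b (child N k) F -> descent b N F.

Lemma descent_rung b N F : descent b N F -> exists k, rung F k = b.
Proof. induction 1 as [N k Hk | N k F _ _ _ IH]; [now exists k | exact IH]. Qed.

Lemma descent_is_node b N F : is_node N -> descent b N F -> is_node F.
Proof.
  intros HN Hd. induction Hd as [N k _ | N k F Hk Hk' _ IH]; [exact HN|].
  exact (IH (child_is_node N k b HN Hk Hk')).
Qed.

Lemma descent_in_node b N F : is_node N -> descent b N F -> base N ≼ b /\ b ≺ top N.
Proof.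
  intros HN Hd. destruct Hd as [N k Hk | N k F Hk Hk' _].
  - rewrite <- Hk. exact (conj (base_le_rung HN k) (rung_lt_top HN k)).
  - exact (conj (le_trans _ _ _ (base_le_rung HN k) (lt_le_incl _ _ Hk))
                (lt_trans _ _ _ Hk' (rung_lt_top HN (S k)))).
Qed.

Lemma descent_functional b N F1 F2 : is_node N -> descent b N F1 -> descent b N F2 -> F1 = F2.
Proof.
  intros HN Hd1. revert F2.
  induction Hd1 as [N k Hk | N k F1 Hk Hk' Hd1 IH]; intros F2 Hd2;
    destruct Hd2 as [N j Hj | N j F2 Hj Hj' Hd2].
  - reflexivity.
  - assert (k = j) as <- by (apply (rung_interval_unique HN k j b);
      [right; exact Hk | rewrite <- Hk; apply rung_lt_succ, HN | left; exact Hj | exact Hj']).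
    exfalso. rewrite Hk in Hj. exact (lt_irrefl b Hj).
  - assert (k = j) as <- by (apply (rung_interval_unique HN k j b);
      [left; exact Hk | exact Hk' | right; exact Hj | rewrite <- Hj; apply rung_lt_succ, HN]).
    exfalso. rewrite Hj in Hk. exact (lt_irrefl b Hk).
  - assert (k = j) as <-
      by exact (rung_interval_unique HN k j b (or_introl Hk) Hk' (or_introl Hj) Hj').
    exact (IH (child_is_node N k b HN Hk Hk') F2 Hd2).
Qed.

Lemma descent_from_root b N F : is_node N -> descent b N F -> descent b root F.
Proof.
  intros HN. revert F. induction HN as [|P k HP IH Hl]; intros F Hd; [exact Hd|].
  apply IH. destruct (descent_in_node b _ F (is_node_child P k HP Hl) Hd) as [Hb Hb'].
  apply (descent_down b P k F); [| exact Hb' | exact Hd].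
  exact (lt_le_trans _ _ _ (lt_succ _ _ (rung_lt_succ HP k)) Hb).
Qed.

Lemma descent_exists b N : is_node N -> base N ≼ b -> b ≺ top N -> exists F, descent b N F.
Proof.
  remember (top N) as y eqn:Ey. revert N Ey.
  induction y as [y IH] using (well_founded_ind lt_wf).
  intros N -> HN Hb Hb'.
  destruct (rung_locate HN b Hb Hb') as [j [[Hlt | Heq] Hj]].
  - destruct (IH (rung N (S j)) (rung_lt_top HN (S j)) (child N j) eq_refl
                 (child_is_node N j b HN Hlt Hj) (succ_le _ _ Hlt) Hj) as [F Hd].
    exists F. exact (descent_down b N j F Hlt Hj Hd).
  - exists N. exact (descent_here b N j Heq).
Qed.

Lemma descent_monotone b N F : is_node N -> descent b N F -> level N <= level F /\ top F ≼ top N.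
Proof.
  intros HN Hd. induction Hd as [N k _ | N k F Hk Hk' _ IH]; [split; [lia | apply le_refl]|].
  destruct (IH (child_is_node N k b HN Hk Hk')) as [Hlev Htop].
  split; [simpl in Hlev; lia|]. left. exact (le_lt_trans _ _ _ Htop (rung_lt_top HN (S k))).
Qed.

Lemma node_below b N :
  is_node N -> base N ≼ b -> b ≺ top N ->
  exists F k, is_node F /\ rung F k = b /\ level N <= level F /\ top F ≼ top N.
Proof.
  intros HN Hb Hb'. destruct (descent_exists b N HN Hb Hb') as [F Hd].
  destruct (descent_rung b N F Hd) as [k Hk].
  destruct (descent_monotone b N F HN Hd) as [Hlev Htop].
  exists F, k. exact (conj (descent_is_node b N F HN Hd) (conj Hk (conj Hlev Htop))).
Qed.

Lemma node_of_co b : in_co lt rho lam b -> exists N k, is_node N /\ rung N k = b.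
Proof.
  intros [Hb Hb']. destruct (node_below b root is_node_root Hb Hb') as [N [k [HN [Hk _]]]].
  now exists N, k.
Qed.

(* Both nodes are where the descent from the root towards the common rung ends. *)
Lemma rung_unique N1 N2 k1 k2 :
  is_node N1 -> is_node N2 -> rung N1 k1 = rung N2 k2 -> N1 = N2 /\ k1 = k2.
Proof.
  intros H1 H2 Heq.
  assert (N1 = N2) as <-.
  { apply (descent_functional (rung N1 k1) root N1 N2 is_node_root).
    - exact (descent_from_root _ N1 N1 H1 (descent_here _ N1 k1 eq_refl)).
    - exact (descent_from_root _ N2 N2 H2 (descent_here _ N2 k2 (eq_sym Heq))). }
  exact (conj eq_refl (rung_inj H1 k1 k2 Heq)).
Qed.

Lemma is_node_top_lam N : is_node N -> top N = lam -> N = root.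
Proof.
  intros [|P k HP _] Htop; [reflexivity|].
  exfalso. pose proof (rung_lt_lam HP (S k)) as Hlt.
  change (rung P (S k) = lam) in Htop. rewrite Htop in Hlt. exact (lt_irrefl lam Hlt).
Qed.

Lemma top_unique N1 N2 : is_node N1 -> is_node N2 -> top N1 = top N2 -> N1 = N2.
Proof.
  intros H1 H2 Htop. destruct (classic (top N1 = lam)) as [Hl | Hne].
  - rewrite (is_node_top_lam N1 H1 Hl), (is_node_top_lam N2 H2 (eq_trans (eq_sym Htop) Hl)).
    reflexivity.
  - revert Htop Hne. destruct H1 as [|P1 k1 HP1 _]; [intros _ Hne; exfalso; exact (Hne eq_refl)|].
    destruct H2 as [|P2 k2 HP2 _]; [intros Htop Hne; exfalso; exact (Hne Htop)|].
    intros Htop _. destruct (rung_unique P1 P2 (S k1) (S k2) HP1 HP2 Htop) as [<- Hk].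
    injection Hk as <-. reflexivity.
Qed.

Lemma node_of_LIM mu : in_LIM_oc lt rho lam mu -> exists N, is_node N /\ top N = mu.
Proof.
  intros [[Hrm [Hml | ->]] Hmu]; [| exact (ex_intro _ root (conj is_node_root eq_refl))].
  destruct (node_of_co mu (conj (lt_le_incl _ _ Hrm) Hml)) as [F [[|j] [HF Hj]]].
  - exfalso. apply Hmu. rewrite <- Hj. exact (is_node_base_isolated F HF).
  - exists (child F j). split; [| exact Hj].
    apply (is_node_child F j HF). rewrite Hj. exact Hmu.
Qed.

(** * The maps ⋄, ℓ and a *)

Definition address (b : T) : node * nat :=
  epsilon (inhabits (root, 0)) (fun p => is_node (fst p) /\ rung (fst p) (snd p) = b).

Definition dia (b : T) : T := top (fst (address b)).

Definition ell (b : T) : nat :=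
  if excluded_middle_informative (b = lam) then 1
  else level (fst (address b)) + snd (address b).

Definition node_at (mu : T) : node :=
  epsilon (inhabits root) (fun N => is_node N /\ top N = mu).

Definition approach (mu : T) : nat -> T := rung (node_at mu).

Lemma address_rung N k : is_node N -> address (rung N k) = (N, k).
Proof.
  intros HN. unfold address.
  set (p := epsilon _ _).
  assert (Hp : is_node (fst p) /\ rung (fst p) (snd p) = rung N k)
    by (apply epsilon_spec; now exists (N, k)).
  destruct p as [F j]. destruct Hp as [HF Hj].
  destruct (rung_unique F N j k HF HN Hj) as [-> ->]. reflexivity.
Qed.

Lemma dia_rung N k : is_node N -> dia (rung N k) = top N.
Proof. intros HN. unfold dia. now rewrite (address_rung N k HN). Qed.

Lemma ell_lam : ell lam = 1.
Proof. unfold ell. destruct (excluded_middle_informative (lam = lam)); congruence. Qed.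

Lemma ell_rung N k : is_node N -> ell (rung N k) = level N + k.
Proof.
  intros HN. unfold ell. destruct (excluded_middle_informative _) as [Heq | _].
  - exfalso. pose proof (rung_lt_lam HN k) as Hlt. rewrite Heq in Hlt. exact (lt_irrefl lam Hlt).
  - now rewrite (address_rung N k HN).
Qed.

Lemma ell_top N : is_node N -> ell (top N) = level N.
Proof.
  intros HN. destruct (classic (top N = lam)) as [Hl | Hne].
  - now rewrite Hl, ell_lam, (is_node_top_lam N HN Hl).
  - destruct HN as [|P k HP _]; [exfalso; exact (Hne eq_refl)|].
    exact (ell_rung P (S k) HP).
Qed.

Lemma approach_top N : is_node N -> approach (top N) = rung N.
Proof.
  intros HN. unfold approach, node_at.
  set (M := epsilon _ _).
  assert (HM : is_node M /\ top M = top N) by (apply epsilon_spec; now exists N).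
  now rewrite (top_unique M N (proj1 HM) HN (proj2 HM)).
Qed.

Lemma dia_in_LIM b : in_co lt rho lam b -> in_LIM_oc lt rho lam (dia b).
Proof.
  intros Hb. destruct (node_of_co b Hb) as [N [k [HN <-]]].
  rewrite (dia_rung N k HN). destruct (is_node_bounds N HN) as [Hrb Htl].
  split; [split|]; [exact (le_lt_trans _ _ _ Hrb (is_node_base_lt_top N HN)) | exact Htl |].
  exact (is_node_top_limit N HN).
Qed.

Lemma dia_surjective mu : in_LIM_oc lt rho lam mu -> exists b, in_co lt rho lam b /\ dia b = mu.
Proof.
  intros Hmu. destruct (node_of_LIM mu Hmu) as [N [HN <-]].
  exists (rung N 0). exact (conj (rung_in_co HN 0) (dia_rung N 0 HN)).
Qed.

Lemma ell_pos b : in_cc lt rho lam b -> 0 < ell b.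
Proof.
  intros [Hb [Hbl | ->]]; [| rewrite ell_lam; lia].
  destruct (node_of_co b (conj Hb Hbl)) as [N [k [HN <-]]].
  rewrite (ell_rung N k HN). pose proof (is_node_level_pos N HN). lia.
Qed.

Lemma ell_rho : ell rho = 1.
Proof. exact (ell_rung root 0 is_node_root). Qed.

Lemma approach_in_co mu k : in_LIM_oc lt rho lam mu -> in_co lt rho lam (approach mu k).
Proof.
  intros Hmu. destruct (node_of_LIM mu Hmu) as [N [HN <-]].
  rewrite (approach_top N HN). exact (rung_in_co HN k).
Qed.

Lemma dia_iter_rung N k : is_node N ->
  exists s, 0 < s /\
    (forall i, i < s -> Nat.iter i dia (rung N k) ≺ Nat.iter (S i) dia (rung N k)) /\
    Nat.iter s dia (rung N k) = lam.
Proof.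
  intros HN. revert k. induction HN as [|P j HP IH Hl]; intros k.
  - pose proof (dia_rung root k is_node_root) as Hd.
    exists 1. split; [lia | split; [| exact Hd]].
    intros i Hi. replace i with 0 by lia. simpl. rewrite Hd. exact (rung_lt_top is_node_root k).
  - pose proof (is_node_child P j HP Hl) as HC.
    destruct (IH (S j)) as [s [Hs [Hinc Hend]]].
    exists (S s). rewrite Nat.iter_succ_r, (dia_rung _ k HC).
    split; [lia | split; [|exact Hend]].
    intros [|i] Hi.
    + simpl. rewrite (dia_rung _ k HC). exact (rung_lt_top HC k).
    + rewrite Nat.iter_succ_r, (Nat.iter_succ_r (S i)), (dia_rung _ k HC).
      apply Hinc. lia.
Qed.

Lemma dia_iter_lam b : in_co lt rho lam b ->
  exists s, 0 < s /\
    (forall k, k < s -> Nat.iter k dia b ≺ Nat.iter (S k) dia b) /\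
    Nat.iter s dia b = lam.
Proof. intros Hb. destruct (node_of_co b Hb) as [N [k [HN <-]]]. exact (dia_iter_rung N k HN). Qed.

Lemma approach_increasing_to mu : in_LIM_oc lt rho lam mu -> increasing_to lt (approach mu) mu.
Proof.
  intros Hmu. destruct (node_of_LIM mu Hmu) as [N [HN <-]].
  rewrite (approach_top N HN).
  exact (conj (rung_lt_succ HN) (conj (rung_lt_top HN) (rung_cofinal HN))).
Qed.

Lemma dia_fiber mu b : in_LIM_oc lt rho lam mu -> in_co lt rho lam b ->
  (dia b = mu <-> exists k, approach mu k = b).
Proof.
  intros Hmu Hb. destruct (node_of_LIM mu Hmu) as [N [HN <-]].
  destruct (node_of_co b Hb) as [F [j [HF <-]]].
  rewrite (approach_top N HN), (dia_rung F j HF). split.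
  - intros Htop. rewrite (top_unique F N HF HN Htop). now exists j.
  - intros [k Hk]. now destruct (rung_unique N F k j HN HF Hk) as [-> _].
Qed.

Lemma ell_approach mu k : in_LIM_oc lt rho lam mu -> ell (approach mu k) = ell mu + k.
Proof.
  intros Hmu. destruct (node_of_LIM mu Hmu) as [N [HN <-]].
  now rewrite (approach_top N HN), (ell_rung N k HN), (ell_top N HN).
Qed.

Lemma ell_dia_above_rung N k g : is_node N -> rung N k ≺ g -> g ≺ top N ->
  level N + k < ell g /\ dia g ≼ top N.
Proof.
  intros HN Hk Hg.
  destruct (rung_locate HN g (le_trans _ _ _ (base_le_rung HN k) (lt_le_incl _ _ Hk)) Hg)
    as [j [[Hlt | <-] Hj]].
  - pose proof (rung_lt_inv HN k (S j) (lt_trans _ _ _ Hk Hj)) as Hkj.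
    destruct (node_below g (child N j) (child_is_node N j g HN Hlt Hj) (succ_le _ _ Hlt) Hj)
      as [F [i [HF [<- [Hlev Htop]]]]].
    rewrite (ell_rung F i HF), (dia_rung F i HF). simpl in Hlev.
    split; [lia|]. left. exact (le_lt_trans _ _ _ Htop (rung_lt_top HN (S j))).
  - pose proof (rung_lt_inv HN k j Hk) as Hkj.
    rewrite (ell_rung N j HN), (dia_rung N j HN). split; [lia | apply le_refl].
Qed.

Lemma ell_dia_gap b g : in_co lt rho lam b -> in_oo lt b (dia b) g ->
  ell b < ell g /\ dia g ≼ dia b.
Proof.
  intros Hb [Hbg Hgd]. destruct (node_of_co b Hb) as [N [k [HN <-]]].
  rewrite (dia_rung N k HN) in Hgd |- *. rewrite (ell_rung N k HN).
  exact (ell_dia_above_rung N k g HN Hbg Hgd).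
Qed.

Lemma ell_succ b b1 : in_co lt rho lam b -> is_succ_of lt b1 b -> ell b1 = ell b + 1.
Proof.
  intros Hb Hsucc. destruct (node_of_co b Hb) as [N [k [HN <-]]].
  rewrite (ell_rung N k HN).
  destruct (proj2 Hsucc _ (rung_lt_succ HN k)) as [Hlt | ->].
  - rewrite <- (succ_unique _ _ Hsucc).
    (* b + 1 is the base of the child node hanging below rung k + 1 *)
    pose proof (child_is_node N k b1 HN (proj1 Hsucc) Hlt) as HC.
    transitivity (level (child N k) + 0); [exact (ell_rung (child N k) 0 HC) | simpl; lia].
  - rewrite (ell_rung N (S k) HN). lia.
Qed.

End LadderSystem.

Theorem lemma3p1 (T : Type) (lt : T -> T -> Prop) (Hwo : is_well_order lt)
  (lam rho : T) (Hlam : limit lt lam) (Hcount : countable_upto lt lam)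
  (Hrho : isolated lt rho) (Hrl : lt rho lam) :
  exists (dia : T -> T) (ell : T -> nat) (a : T -> nat -> T),
    (* dia : [rho,lam) -> LIM((rho,lam]) surjective *)
    (forall b, in_co lt rho lam b -> in_LIM_oc lt rho lam (dia b)) /\
    (forall mu, in_LIM_oc lt rho lam mu -> exists b, in_co lt rho lam b /\ dia b = mu) /\
    (* ell : [rho,lam] -> omega \ {0} *)
    (forall b, in_cc lt rho lam b -> 0 < ell b) /\
    (* a : LIM((rho,lam]) x omega -> [rho,lam) *)
    (forall mu k, in_LIM_oc lt rho lam mu -> in_co lt rho lam (a mu k)) /\
    (* (a) *)
    (forall b, in_co lt rho lam b ->
       exists s, 0 < s /\
         (forall k, k < s -> lt (Nat.iter k dia b) (Nat.iter (S k) dia b)) /\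
         Nat.iter s dia b = lam) /\
    (* (b) *)
    (forall mu, in_LIM_oc lt rho lam mu ->
       increasing_to lt (a mu) mu /\
       (forall b, in_co lt rho lam b -> (dia b = mu <-> exists k, a mu k = b)) /\
       (forall k, ell (a mu k) = ell mu + k)) /\
    ell lam = 1 /\ ell rho = 1 /\
    (* (c) *)
    (forall b g, in_co lt rho lam b -> in_oo lt b (dia b) g ->
       ell b < ell g /\ le lt (dia g) (dia b)) /\
    (* (d) *)
    (forall b b1, in_co lt rho lam b -> is_succ_of lt b1 b -> ell b1 = ell b + 1).
Proof.
  destruct Hcount as [code Hcode].
  exists (dia lt lam rho code), (ell lt lam rho code), (approach lt lam rho code).
  split; [|split; [|split; [|split; [|split; [|split; [|split; [|split; [|split]]]]]]]].
  - intros b; eapply dia_in_LIM; eassumption.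
  - intros mu; eapply dia_surjective; eassumption.
  - intros b; eapply ell_pos; eassumption.
  - intros mu k; eapply approach_in_co; eassumption.
  - intros b; eapply dia_iter_lam; eassumption.
  - intros mu Hmu. split; [|split].
    + eapply approach_increasing_to; eassumption.
    + intros b; eapply dia_fiber; eassumption.
    + intros k; eapply ell_approach; eassumption.
  - apply ell_lam.
  - eapply ell_rho; eassumption.
  - intros b g; eapply ell_dia_gap; eassumption.
  - intros b b1; eapply ell_succ; eassumption.
Qed.
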